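(* Let $X$ be a real Hilbert space, let $\rho>-1$, and let $A\colon X\rightrightarrows X$ be $\rho$-comonotone. Then $$\operatorname{gra} A=\{(J_A x,\,(\mathrm{Id}-J_A)x) : x\in \operatorname{ran}(\mathrm{Id}+A)\}.$$ Moreover, $A$ is maximally $\rho$-comonotone if and only if $\operatorname{ran}(\mathrm{Id}+A)=X$, in which case $$\operatorname{gra} A=\{(J_A x,\,(\mathrm{Id}-J_A)x) : x\in X\}.$$
   Context: $X$ is a real Hilbert space with inner product $\langle\cdot,\cdot\rangle$ and norm $\|\cdot\|$; $\mathrm{Id}$ is the identity on $X$. For a set-valued operator $A\colon X\rightrightarrows X$, $\operatorname{gra}A=\{(x,u): u\in Ax\}$, $A^{-1}$ is the operator with $\operatorname{gra}A^{-1}=\{(u,x):(x,u)\in\operatorname{gra}A\}$, and the resolvent is $J_A=(\mathrm{Id}+A)^{-1}$ (whose domain is $\operatorname{ran}(\mathrm{Id}+A)$). For $\rho\in\mathbb R$, $A$ is $\rho$-comonotone if $\langle x-y,u-v\rangle\ge\rho\|u-v\|^2$ for all $(x,u),(y,v)\in\operatorname{gra}A$; it is maximally $\rho$-comonotone if it is $\rho$-comonotone and no $\rho$-comonotone operator has a graph properly containing $\operatorname{gra}A$. *)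

From HB Require Import structures.
From mathcomp Require Import all_boot all_order all_algebra.
From mathcomp Require Import all_classical all_reals all_analysis.
Set Implicit Arguments. Unset Strict Implicit. Unset Printing Implicit Defensive.
Import Order.TTheory GRing.Theory Num.Theory.
Import numFieldNormedType.Exports.
Local Open Scope classical_set_scope.
Local Open Scope ring_scope.

Definition is_inner_product (R : realType) (X : completeNormedModType R)
  (ip : X -> X -> R) : Prop :=
  [/\ forall x y, ip x y = ip y x,
      forall a x y z, ip (a *: x + y) z = a * ip x z + ip y z
    & forall x, ip x x = `|x| ^+ 2].

(* Set-valued operators A : X ⇉ X are represented as A : X -> set X. *)
Definition gra (R : realType) (X : completeNormedModType R) (A : X -> set X)
  : set (X * X) := [set p | A p.1 p.2].

Definition comonotone (R : realType) (X : completeNormedModType R)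
  (ip : X -> X -> R) (rho : R) (A : X -> set X) : Prop :=
  forall x u y v, A x u -> A y v -> rho * `|u - v| ^+ 2 <= ip (x - y) (u - v).

Definition max_comonotone (R : realType) (X : completeNormedModType R)
  (ip : X -> X -> R) (rho : R) (A : X -> set X) : Prop :=
  comonotone ip rho A /\
  forall B : X -> set X, comonotone ip rho B ->
    gra A `<=` gra B -> gra B = gra A.

Definition ran_IdA (R : realType) (X : completeNormedModType R)
  (A : X -> set X) : set X :=
  [set x | exists y u, A y u /\ x = y + u].

Definition resolvent_rel (R : realType) (X : completeNormedModType R)
  (A : X -> set X) (x : X) : set X :=
  [set y | exists u, A y u /\ x = y + u].

(* The resolvent as a function: J_A x is (a chosen) element of (Id+A)^{-1} x
   when x ∈ ran (Id + A) (arbitrary value 0 outside). *)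
Definition resolvent (R : realType) (X : completeNormedModType R)
  (A : X -> set X) (x : X) : X :=
  xget 0 (resolvent_rel A x).

(* If rho > -1, then y + u determines (y, u) on the graph of a rho-comonotone
   operator: subtracting two such points, rho |u - u'|^2 <= <y - y', u - u'>
   = -|y - y'|^2. This gives the description of gra A through J_A and shows
   that ran (Id + A) = X forces maximality.

   Conversely, for fixed z the affine bijection
   (a, b) |-> (z + a + rho/(1+rho) b, b/(1+rho)) turns the graph of A into the
   graph of an operator G with <dy, dv> - rho |dv|^2 = <da, db>/(1+rho), so G
   is maximally monotone and zeros of Id + G give solutions of z in (Id + A) y.
   Minty's theorem for G is proved as by Simons and Zalinescu: the function
   F(x, u) = sup_{(a, b) in G} (|x + u|^2/2 - <x - a, u - b>), the Fitzpatrick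
   function of G plus |(x, u)|^2/2, is nonnegative by maximality, uniformly
   convex and lower semicontinuous, hence attains its infimum m at some
   (x0, u0). Moving from (x0, u0) towards points of G shows that (-u0, -x0) is
   monotonically related to G, hence lies in G, and the same inequality at
   that point reads |x0 + u0|^2 <= -2m <= 0. *)

From HB Require Import structures.
From mathcomp Require Import all_boot all_order all_algebra.
From mathcomp Require Import all_classical all_reals all_analysis.
From mathcomp Require Import ring lra.
Import Order.TTheory GRing.Theory Num.Theory.
Import numFieldNormedType.Exports.
Set Implicit Arguments. Unset Strict Implicit. Unset Printing Implicit Defensive.
Local Open Scope classical_set_scope.
Local Open Scope ring_scope.

Lemma cvg_sqr_dist (R : realType) (V : completeNormedModType R)
  (w : nat -> V) (e : nat -> R) :
  e @ \oo --> 0 -> (forall n k, (n <= k)%N -> `|w k - w n| ^+ 2 <= e n) ->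
  cvg (w @ \oo).
Proof.
move=> e0 we; apply: cauchy_cvg; apply: cauchy_exP => d d0.
move/cvgr0_norm_lt: e0 => /(_ _ (exprn_gt0 2 d0)) [N _ eN].
exists (w N), N => // k /= Nk.
rewrite -ball_normE /ball_ /= distrC -ltr_sqr ?nnegrE ?(ltW d0) //.
exact: le_lt_trans (we _ _ Nk) (le_lt_trans (ler_norm _) (eN N (leqnn N))).
Qed.

Section InnerProduct.
Variables (R : realType) (X : completeNormedModType R) (ip : X -> X -> R).
Hypothesis ip_inner : is_inner_product ip.

Lemma ipC x y : ip x y = ip y x.
Proof. by case: ip_inner. Qed.

Lemma ipDl x y z : ip (x + y) z = ip x z + ip y z.
Proof. by case: ip_inner => _ ip_lin _; rewrite -[x in LHS]scale1r ip_lin mul1r. Qed.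

Lemma ip0l z : ip 0 z = 0.
Proof. by apply/(addrI (ip 0 z)); rewrite -ipDl !addr0. Qed.

Lemma ipZl a x z : ip (a *: x) z = a * ip x z.
Proof. by case: ip_inner => _ ip_lin _; rewrite -[a *: x]addr0 ip_lin ip0l addr0. Qed.

Lemma ipNl x z : ip (- x) z = - ip x z.
Proof. by rewrite -scaleN1r ipZl mulN1r. Qed.

Lemma ipBl x y z : ip (x - y) z = ip x z - ip y z.
Proof. by rewrite ipDl ipNl. Qed.

Lemma ipDr x y z : ip z (x + y) = ip z x + ip z y.
Proof. by rewrite !(ipC z) ipDl. Qed.

Lemma ipZr a x z : ip z (a *: x) = a * ip z x.
Proof. by rewrite !(ipC z) ipZl. Qed.

Lemma ipNr x z : ip z (- x) = - ip z x.
Proof. by rewrite !(ipC z) ipNl. Qed.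

Lemma ipBr x y z : ip z (x - y) = ip z x - ip z y.
Proof. by rewrite !(ipC z) ipBl. Qed.

Lemma ipxx x : ip x x = `|x| ^+ 2.
Proof. by case: ip_inner. Qed.

Lemma ipxx_ge0 x : 0 <= ip x x.
Proof. by rewrite ipxx sqr_ge0. Qed.

Lemma ipxx_eq0 x : (ip x x == 0) = (x == 0).
Proof. by rewrite ipxx sqrf_eq0 normr_eq0. Qed.

Lemma ip_sqrD x y : ip (x + y) (x + y) = ip x x + 2 * ip x y + ip y y.
Proof. by rewrite !(ipDl, ipDr) (ipC y x); ring. Qed.

Lemma ip_cvg {T} {F : set_system T} {FF : Filter F} (f g : T -> X) x y :
  f @ F --> x -> g @ F --> y -> ip (f t) (g t) @[t --> F] --> ip x y.
Proof.
have polar z z' : ip z z' = (`|z + z'| ^+ 2 - `|z| ^+ 2 - `|z'| ^+ 2) / 2.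
  by rewrite -!ipxx ip_sqrD; field.
move=> fx gy; rewrite polar; under eq_fun do rewrite polar.
apply: cvgMr_tmp; rewrite !expr2.
by apply: cvgB; [apply: cvgB|]; apply: cvgM; apply: cvg_norm;
  rewrite ?fx ?gy //; apply: cvgD.
Qed.

Section Minty.

(* [fitz a b x u] is the (a, b)-term of the supremum defining F. *)
Definition fitz (a b x u : X) : R := ip (x + u) (x + u) / 2 - ip (x - a) (u - b).

Lemma fitz_segment a b x u x' u' t :
  fitz a b (x + t *: (x' - x)) (u + t *: (u' - u)) =
  (1 - t) * fitz a b x u + t * fitz a b x' u'
  - t * (1 - t) / 2 * (ip (x' - x) (x' - x) + ip (u' - u) (u' - u)).
Proof.
rewrite /fitz !(ipDl, ipDr, ipBl, ipBr, ipZl, ipZr, ipNl, ipNr).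
rewrite [ip u x]ipC [ip u x']ipC [ip u' u]ipC [ip u' x]ipC [ip u' x']ipC [ip x' x]ipC.
by field.
Qed.

Variable G : X -> X -> Prop.
Hypothesis G_mono : forall a b a' b', G a b -> G a' b' -> 0 <= ip (a - a') (b - b').
Hypothesis G_max :
  forall x u, (forall a b, G a b -> 0 <= ip (x - a) (u - b)) -> G x u.

(* [fitz_le x u c] encodes F(x, u) <= c, as F may be infinite. *)
Definition fitz_le (x u : X) (c : R) := forall a b, G a b -> fitz a b x u <= c.

Lemma fitz_le_ge0 x u c : fitz_le x u c -> 0 <= c.
Proof.
move=> xuc; have sq_ge0 := divr_ge0 (ipxx_ge0 (x + u)) (ler0n R 2).
have [xu_rel|] := pselect (forall a b, G a b -> 0 <= ip (x - a) (u - b)).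
  by have := xuc _ _ (G_max xu_rel); rewrite /fitz !subrr ip0l subr0; lra.
move=> /existsNP [a /existsNP [b /not_implyP [Gab /negP]]]; rewrite -ltNge => lt0.
by have := xuc _ _ Gab; rewrite /fitz; lra.
Qed.

Let V := [set c | exists x u, fitz_le x u c].

Lemma has_inf_fitz : has_inf V.
Proof.
split; last by exists 0 => c [x [u]]; apply: fitz_le_ge0.
have [a [b Gab]] : exists a b, G a b.
  have [//|noG] := pselect (exists a b, G a b).
  exists 0, 0; apply: G_max => a b Gab.
  by case: noG; exists a, b.
exists (ip (a + b) (a + b) / 2), a, b => a' b' Ga'b'.
by have := G_mono Gab Ga'b'; rewrite /fitz; lra.
Qed.

Let m := inf V.

Lemma inf_le_fitz x u c : fitz_le x u c -> m <= c.
Proof. by move=> xuc; apply: ge_inf; [case: has_inf_fitz | exists x, u]. Qed.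

Lemma fitz_le_dist x u c x' u' c' : fitz_le x u c -> fitz_le x' u' c' ->
  ip (x' - x) (x' - x) + ip (u' - u) (u' - u) <= 4 * (c + c') - 8 * m.
Proof.
move=> xuc xuc'.
set D := ip (x' - x) (x' - x) + ip (u' - u) (u' - u).
suff /inf_le_fitz : fitz_le (x + 2^-1 *: (x' - x)) (u + 2^-1 *: (u' - u))
                             ((c + c') / 2 - D / 8) by lra.
move=> a b Gab; rewrite fitz_segment -/D.
by have := xuc _ _ Gab; have := xuc' _ _ Gab; lra.
Qed.

Lemma fitz_le_cvg (xs us : nat -> X) (cs : nat -> R) x u c :
  xs @ \oo --> x -> us @ \oo --> u -> cs @ \oo --> c ->
  (forall n, fitz_le (xs n) (us n) (cs n)) -> fitz_le x u c.
Proof.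
move=> xsx usu csc xuc a b Gab.
apply: (ler_cvg_to _ csc); last by near=> n; exact: xuc _ _ _ Gab.
apply: cvgB; first by apply: cvgMr_tmp; apply: ip_cvg; apply: cvgD.
by apply: ip_cvg; apply: cvgB => //; exact: cvg_cst.
Unshelve. all: by end_near.
Qed.

Lemma fitz_le_min : exists x u, fitz_le x u m.
Proof.
have approx n : exists p : X * X, fitz_le p.1 p.2 (m + harmonic n).
  have [c [x [u xuc]] cm] := inf_adherent (harmonic_gt0 n) has_inf_fitz.
  by exists (x, u) => a b Gab; apply: le_trans (xuc _ _ Gab) (ltW cm).
have [p pm] := choice approx.
have dist n k : (n <= k)%N ->
    ip ((p k).1 - (p n).1) ((p k).1 - (p n).1) +
    ip ((p k).2 - (p n).2) ((p k).2 - (p n).2) <= 8 * harmonic n.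
  move=> nk; have := fitz_le_dist (pm n) (pm k).
  have : harmonic k <= harmonic n :> R by rewrite /= lef_pV2 ?posrE ?ler_nat.
  lra.
have h8 : 8 * harmonic n @[n --> \oo] --> (0 : R).
  by rewrite -(mulr0 8); apply: cvgMl_tmp; exact: cvg_harmonic.
have /cvg_ex [x xsx] : cvg ((fun n => (p n).1) @ \oo).
  apply: (cvg_sqr_dist h8) => n k nk; rewrite -ipxx.
  by have := dist n k nk; have := ipxx_ge0 ((p k).2 - (p n).2); lra.
have /cvg_ex [u usu] : cvg ((fun n => (p n).2) @ \oo).
  apply: (cvg_sqr_dist h8) => n k nk; rewrite -ipxx.
  by have := dist n k nk; have := ipxx_ge0 ((p k).1 - (p n).1); lra.
exists x, u; apply: (fitz_le_cvg xsx usu _ pm).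
by rewrite -[m in _ --> m]addr0; apply: cvgD; [exact: cvg_cst | exact: cvg_harmonic].
Qed.

Lemma fitz_le_min_variational x0 u0 a b : fitz_le x0 u0 m -> G a b ->
  m <= (ip (a + b) (a + b) - ip (a - x0) (a - x0) - ip (b - u0) (b - u0)) / 2.
Proof.
move=> x0u0m Gab.
set D := ip (a - x0) (a - x0) + ip (b - u0) (b - u0).
set Y := ip (a + b) (a + b) / 2.
have step t : 0 < t -> t <= 1 -> m <= Y - D / 2 + t * (D / 2).
  move=> t0 t1.
  suff : m <= (1 - t) * m + t * Y - t * (1 - t) / 2 * D.
    have -> : (1 - t) * m + t * Y - t * (1 - t) / 2 * D =
              m + t * (Y - D / 2 + t * (D / 2) - m) by field.
    by rewrite -subr_ge0 [m + _]addrC addrK pmulr_rge0 // subr_ge0.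
  apply: (@inf_le_fitz (x0 + t *: (a - x0)) (u0 + t *: (b - u0))).
  move=> a' b' Ga'b'; rewrite fitz_segment -/D.
  have : (1 - t) * fitz a' b' x0 u0 <= (1 - t) * m.
    by rewrite ler_wpM2l ?subr_ge0 ?x0u0m.
  have : t * fitz a' b' a b <= t * Y.
    by rewrite ler_wpM2l ?(ltW t0) // /fitz -/Y; have := G_mono Gab Ga'b'; lra.
  lra.
have lim0 : Y - D / 2 + harmonic n * (D / 2) @[n --> \oo] --> Y - D / 2.
  rewrite -[X in _ --> X]addr0 -(mul0r (D / 2)).
  by apply: cvgD; [exact: cvg_cst | apply: cvgMr_tmp; exact: cvg_harmonic].
suff : m <= Y - D / 2 by rewrite /Y /D; lra.
apply: (ler_cvg_to (cvg_cst m) lim0); near=> n; apply: step.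
  exact: harmonic_gt0.
by rewrite /= invf_le1 ?ler1n.
Unshelve. all: by end_near.
Qed.

Lemma minty : exists x u, G x u /\ x + u = 0.
Proof.
have [x0 [u0 x0u0m]] := fitz_le_min.
have m0 : 0 <= m := fitz_le_ge0 x0u0m.
have G_opp : G (- u0) (- x0).
  apply: G_max => a b Gab; have := fitz_le_min_variational x0u0m Gab.
  have := ipxx_ge0 (x0 + u0).
  rewrite -!opprD !(ipDl, ipDr, ipBl, ipBr, ipNl, ipNr) !opprK.
  rewrite [ip b a]ipC [ip x0 a]ipC [ip b u0]ipC [ip u0 x0]ipC.
  lra.
have := fitz_le_min_variational x0u0m G_opp.
rewrite -!opprD !(ipNl, ipNr) !opprK [u0 + x0]addrC => le_m.
have /eqP : ip (x0 + u0) (x0 + u0) = 0.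
  by apply/eqP; rewrite eq_le ipxx_ge0 andbT; lra.
rewrite ipxx_eq0 => /eqP sum0.
by exists (- u0), (- x0); rewrite -opprD addrC sum0 oppr0.
Qed.

End Minty.

Section Comonotone.
Variable rho : R.
Hypothesis rho_gt : -1 < rho.

Let rho1_gt0 : 0 < 1 + rho.
Proof. by have := rho_gt; lra. Qed.

Let rho1_neq0 : 1 + rho != 0 := lt0r_neq0 rho1_gt0.

Lemma comonotone_IdA_inj (B : X -> set X) y1 u1 y2 u2 :
  comonotone ip rho B -> B y1 u1 -> B y2 u2 ->
  y1 + u1 = y2 + u2 -> y1 = y2 /\ u1 = u2.
Proof.
move=> HB B1 B2 sum_eq.
have u_diff : u1 - u2 = - (y1 - y2).
  by rewrite opprB; apply/eqP; rewrite subr_eq addrAC -sum_eq [y1 + u1]addrC addrK.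
have := HB _ _ _ _ B1 B2; rewrite u_diff normrN -ipxx ipNr => le.
have : (1 + rho) * ip (y1 - y2) (y1 - y2) <= 0 by rewrite mulrDl mul1r; lra.
rewrite pmulr_rle0 // => le0.
have /eqP : ip (y1 - y2) (y1 - y2) = 0 by apply/eqP; rewrite eq_le le0 ipxx_ge0.
rewrite ipxx_eq0 subr_eq0 => /eqP y_eq; split => //.
by move/eqP: u_diff; rewrite y_eq subrr oppr0 subr_eq0 => /eqP.
Qed.

Definition shift_fst (z a b : X) : X := z + (a + (rho / (1 + rho)) *: b).
Definition shift_snd (b : X) : X := (1 + rho)^-1 *: b.

Lemma shift_gap z a b a' b' :
  ip (shift_fst z a b - shift_fst z a' b') (shift_snd b - shift_snd b')
  - rho * `|shift_snd b - shift_snd b'| ^+ 2 = ip (a - a') (b - b') / (1 + rho).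
Proof.
rewrite /shift_fst /shift_snd -ipxx -scalerBr opprD addrACA subrr add0r.
rewrite opprD addrACA -scalerBr !(ipDl, ipNl, ipZl, ipZr).
by field.
Qed.

Lemma shift_onto z y v : exists a b, y = shift_fst z a b /\ v = shift_snd b.
Proof.
exists (y - z - rho *: v), ((1 + rho) *: v).
rewrite /shift_fst /shift_snd !scalerA divfK // mulVf // scale1r.
by rewrite subrK addrC subrK.
Qed.

Lemma shift_sum z x u : x + u = 0 -> shift_fst z x u + shift_snd u = z.
Proof.
move=> xu0; rewrite /shift_fst /shift_snd -!addrA -scalerDl.
have -> : rho / (1 + rho) + (1 + rho)^-1 = 1 by field.
by rewrite scale1r xu0 addr0.
Qed.

Variable A : X -> set X.

Lemma resolvent_graph x :
  ran_IdA A x -> A (resolvent A x) (x - resolvent A x).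
Proof.
case=> y [u yu]; have : resolvent_rel A x (resolvent A x).
  by rewrite /resolvent; apply: (@xgetI _ 0 _ y); exists u.
by case=> u' [Au' x_eq]; rewrite {2}x_eq addrAC subrr add0r.
Qed.

Lemma max_comonotone_related y u : max_comonotone ip rho A ->
  (forall x v, A x v -> rho * `|u - v| ^+ 2 <= ip (y - x) (u - v)) -> A y u.
Proof.
move=> [HA maxA] yu_rel.
pose B a := [set b | A a b \/ (a = y /\ b = u)].
have HB : comonotone ip rho B.
  move=> x1 v1 x2 v2 [A1|[-> ->]] [A2|[-> ->]].
  - exact: HA.
  - by rewrite -(opprB u) normrN -(opprB y) ipNl ipNr opprK yu_rel.
  - exact: yu_rel.
  - by rewrite !subrr normr0 expr0n mulr0 ip0l.
have /seteqP [BA _] := maxA B HB (fun p Ap => or_introl Ap).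
by apply: (BA (y, u)); right.
Qed.

Lemma max_comonotone_ran_IdA : max_comonotone ip rho A -> ran_IdA A = setT.
Proof.
move=> maxA; apply/seteqP; split=> // z _.
pose G a b := A (shift_fst z a b) (shift_snd b).
have G_mono a b a' b' : G a b -> G a' b' -> 0 <= ip (a - a') (b - b').
  move=> Gab Ga'b'; have := maxA.1 _ _ _ _ Gab Ga'b'.
  by rewrite -subr_ge0 shift_gap pmulr_lge0 // invr_gt0.
have G_max x u : (forall a b, G a b -> 0 <= ip (x - a) (u - b)) -> G x u.
  move=> xu_rel; apply: max_comonotone_related maxA _ => y v.
  have [a [b [-> ->]]] := shift_onto z y v => Gab.
  by rewrite -subr_ge0 shift_gap divr_ge0 ?xu_rel ?ltW.
have [x [u [Gxu xu0]]] := minty G_mono G_max.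
by exists (shift_fst z x u), (shift_snd u); rewrite shift_sum.
Qed.

Hypothesis HA : comonotone ip rho A.

Lemma resolventE y u : A y u -> resolvent A (y + u) = y.
Proof.
move=> Ayu; have ran_yu : ran_IdA A (y + u) by exists y, u.
apply: (proj1 (comonotone_IdA_inj HA (resolvent_graph ran_yu) Ayu _)).
by rewrite addrC subrK.
Qed.

Lemma gra_resolvent : gra A = [set p | exists x, ran_IdA A x /\
                                 p = (resolvent A x, x - resolvent A x)].
Proof.
apply/seteqP; split=> [[y u] /= Ayu|_ [x [ran_x ->]]]; last exact: resolvent_graph.
exists (y + u); split; first by exists y, u.
by rewrite resolventE // [y + u]addrC addrK.
Qed.

Lemma ran_IdA_max_comonotone : ran_IdA A = setT -> max_comonotone ip rho A.
Proof.
move=> ranT; split=> // B HB AB; apply/seteqP; split=> // -[y v] Byv.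
have [y' [u' [Ay'u' yv_eq]]] : ran_IdA A (y + v) by rewrite ranT.
have [y_eq v_eq] := comonotone_IdA_inj HB Byv (AB (y', u') Ay'u') yv_eq.
move: y_eq v_eq => /= -> ->; exact: Ay'u'.
Qed.

End Comonotone.
End InnerProduct.

Theorem theorem2p16 (R : realType) (X : completeNormedModType R)
  (ip : X -> X -> R) (Hip : is_inner_product ip)
  (rho : R) (Hrho : -1 < rho) (A : X -> set X) (HA : comonotone ip rho A) :
  [/\ gra A = [set p | exists x, ran_IdA A x /\
                 p = (resolvent A x, x - resolvent A x)],
      max_comonotone ip rho A <-> ran_IdA A = setT
    & ran_IdA A = setT ->
      gra A = [set p | exists x : X, p = (resolvent A x, x - resolvent A x)]].
Proof.
have gra_eq := gra_resolvent Hip Hrho HA.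
split=> //.
  split; first exact: (max_comonotone_ran_IdA Hip Hrho).
  exact: (ran_IdA_max_comonotone Hip Hrho HA).
move=> ranT; rewrite gra_eq ranT.
by apply/seteqP; split=> p [x]; [case=> _ -> | move=> ->]; exists x.
Qed.
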